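(* Let $\kappa\ge1$ and $n\ge1$ be integers, let $G$ be a binary $\kappa\times n$ matrix, and let $q$ be its code definition vector. For a subset $R\subseteq\{1,\dots,n\}$ let $G_R$ be the submatrix of $G$ consisting of the columns indexed by $R$ (rank over $\mathbb{F}_2$, with $\mathrm{rank}(G_\emptyset)=0$). (a) For an integer $0<\mu\le n$, let $R$ be a uniformly random $\mu$-element subset of $\{1,\dots,n\}$ and set $L(n,\mu,q)=\mathbb{E}\big[|R|-\mathrm{rank}(G_R)\big]$. Then $L(n,\mu,q)=\mu-\kappa+\sum_{\delta=1}^{\kappa}K_\delta\sum_{S\in\Xi(W,\kappa-\delta)}\Phi(S,n,\mu,q).$ (b) For $0\le\epsilon\le1$, let $R$ be a random subset of $\{1,\dots,n\}$ containing each index independently with probability $1-\epsilon$, and set $l(n,\epsilon,q)=\mathbb{E}\big[|R|-\mathrm{rank}(G_R)\big]$. Then $l(n,\epsilon,q)=n(1-\epsilon)-\kappa+\sum_{\delta=1}^{\kappa}K_\delta\sum_{S\in\Xi(W,\kappa-\delta)}\phi(S,n,\epsilon,q),$ where in both cases $K_\delta=\prod_{i=1}^{\delta-1}(1-2^i)$ (so $K_1=1$).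
   Context: $W=\mathbb{F}_2^\kappa$; $\nu(i)\in W$ is the binary expansion of $i\in\{0,\dots,2^\kappa-1\}$. The code definition vector of a binary $\kappa\times n$ matrix $G$ is $q=(q_0,\dots,q_{2^\kappa-1})$ with $q_i$ equal to the number of columns of $G$ equal to $\nu(i)$, divided by $n$. For a subspace $S\subseteq W$, $\zeta(S,q)=\sum_{i:\nu(i)\in S}q_i$; $\Xi(S,d)$ is the set of all $d$-dimensional subspaces of $S$. Define $\Phi(S,n,\mu,q)=\prod_{i=0}^{\mu-1}\frac{\zeta(S,q)-i/n}{1-i/n}$ and $\phi(S,n,\epsilon,q)=\epsilon^{n(1-\zeta(S,q))}$ (convention $0^0=1$). (In the wiretap setting, for a coset code with base-code generator matrix $G$ and uniformly distributed message, $|R|-\mathrm{rank}(G_R)$ is the eavesdropper's information loss $I(M;Z)$ given revealed positions $R$, so $L$ and $l$ are the expected equivocation losses.) *)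

From mathcomp Require Import all_boot all_order all_algebra.
From mathcomp Require Import reals exp.
Set Implicit Arguments. Unset Strict Implicit. Unset Printing Implicit Defensive.
Import Order.TTheory GRing.Theory Num.Theory.
Local Open Scope ring_scope.

Section Defs.
Variable R : realType.
Variables k n : nat.

Definition W := 'rV['F_2]_k.

(* nu(i) = binary expansion of i : entry j is bit j of i. *)
Definition nu (i : 'I_(2 ^ k)) : W :=
  \row_(j < k) (odd (i %/ 2 ^ j))%:R.

Definition colW (G : 'M['F_2]_(k, n)) (j : 'I_n) : W := (col j G)^T.

Definition cdv (G : 'M['F_2]_(k, n)) (i : 'I_(2 ^ k)) : R :=
  #|[set j : 'I_n | colW G j == nu i]|%:R / n%:R.

Definition span_set (M : 'M['F_2]_k) : {set W} := [set v : W | (v <= M)%MS].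

Definition Xi (d : nat) : {set {set W}} :=
  [set S : {set W} | [exists M : 'M['F_2]_k, (S == span_set M) && (\rank M == d)]].

Definition zeta (S : {set W}) (q : 'I_(2 ^ k) -> R) : R :=
  \sum_(i < 2 ^ k | nu i \in S) q i.

Definition Phi (S : {set W}) (mu : nat) (q : 'I_(2 ^ k) -> R) : R :=
  \prod_(0 <= i < mu) ((zeta S q - i%:R / n%:R) / (1 - i%:R / n%:R)).

(* powR satisfies 0 `^ 0 = 1 *)
Definition phi (S : {set W}) (eps : R) (q : 'I_(2 ^ k) -> R) : R :=
  eps `^ (n%:R * (1 - zeta S q)).

Definition Kc (delta : nat) : R := \prod_(1 <= i < delta) (1 - 2 ^+ i).

Definition subcols (G : 'M['F_2]_(k, n)) (Rs : {set 'I_n}) : 'M['F_2]_(k, #|Rs|) :=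
  colsub (fun i : 'I_#|Rs| => enum_val i) G.

Definition loss (G : 'M['F_2]_(k, n)) (Rs : {set 'I_n}) : R :=
  #|Rs|%:R - (\rank (subcols G Rs))%:R.

Definition L_unif (G : 'M['F_2]_(k, n)) (mu : nat) : R :=
  (\sum_(Rs : {set 'I_n} | #|Rs| == mu) loss G Rs) / ('C(n, mu))%:R.

Definition l_bern (G : 'M['F_2]_(k, n)) (eps : R) : R :=
  \sum_(Rs : {set 'I_n}) ((1 - eps) ^+ #|Rs| * eps ^+ (n - #|Rs|)) * loss G Rs.

End Defs.

From mathcomp Require Import all_boot all_order all_algebra.
From mathcomp Require Import reals exp.
From mathcomp Require Import zify ring lra.
Set Implicit Arguments. Unset Strict Implicit. Unset Printing Implicit Defensive.
Import Order.TTheory GRing.Theory Num.Theory.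
Local Open Scope ring_scope.

(** Let V be the row space spanned by the columns of G indexed by R and r its dimension.
    Counting ordered independent extensions of V in two ways shows that the
    (k-d)-dimensional subspaces of W containing V are counted by the Gaussian binomial
    [k-r, k-r-d]_2, and Pascal's rule gives sum_(d=1..m) K_d [m, m-d]_2 = m.  Hence
    k - rank G_R = sum_d K_d #{S in Xi(W,k-d) | R ⊆ T(S)}, where T(S) is the set of
    columns of G lying in S, so that |T(S)| = n zeta(S,q).  By linearity it remains to
    compute P(R ⊆ T): C(|T|,mu)/C(n,mu) = Phi(S,n,mu,q) for a uniform
    mu-subset, and eps^(n-|T|) = phi(S,n,eps,q) for the Bernoulli subset. *)

Section RowSpaces.
Variables (F : fieldType) (k : nat).

Lemma mxrank_col_mx_row m (A : 'M[F]_(m, k)) (w : 'rV[F]_k) :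
  \rank (col_mx A w) = (\rank A + ~~ (w <= A)%MS)%N.
Proof.
rewrite -addsmxE; have [wA | wNA] /= := boolP (w <= A)%MS.
  by rewrite addn0 (addsmx_idPl wA).
apply/eqP; rewrite eqn_leq; apply/andP; split.
  by apply: leq_trans (mxrank_adds_leqif A w) _; rewrite leq_add2l rank_leq_row.
by rewrite addn1 (ltn_leqif (mxrank_leqif_sup (addsmxSl A w))) addsmx_sub submx_refl.
Qed.

Lemma mxrank_col_mx_cons m j (V : 'M[F]_(m, k)) (w : 'rV[F]_k) (B : 'M[F]_(j, k)) :
  \rank (col_mx V (col_mx w B)) = (\rank (col_mx V B) + ~~ (w <= col_mx V B)%MS)%N.
Proof.
rewrite -mxrank_col_mx_row -!addsmxE -(adds_eqmx (eqmx_refl V) (addsmxE w B)).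
rewrite -(adds_eqmx (addsmxE V B) (eqmx_refl w)).
by rewrite addsmxA (addsmxC V w) -addsmxA addsmxC.
Qed.

Lemma mxrank_col_mx_leq m j (V : 'M[F]_(m, k)) (B : 'M[F]_(j, k)) :
  (\rank (col_mx V B) <= \rank V + j)%N.
Proof.
rewrite -addsmxE; apply: leq_trans (mxrank_adds_leqif V B) _.
by rewrite leq_add2l rank_leq_row.
Qed.

End RowSpaces.

Section IndependentExtensions.
Variables (F : finFieldType) (k : nat).

Lemma card_submx m (M : 'M[F]_(m, k)) :
  #|[set v : 'rV[F]_k | (v <= M)%MS]| = (#|F| ^ \rank M)%N.
Proof.
have -> : [set v : 'rV[F]_k | (v <= M)%MS] = [set u *m row_base M | u : 'rV_(\rank M)].
  apply/setP=> v; rewrite inE -(eq_row_base M).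
  by apply/idP/imsetP=> [/submxP[u ->] | [u _ ->]]; [exists u | apply: submxMl].
rewrite card_imset ?card_mx ?mul1n //.
have [B baseB] := row_freeP (row_base_free M).
by apply: (can_inj (g := mulmx^~ B)) => u; rewrite -mulmxA baseB mulmx1.
Qed.

Definition indep_ext j p (U : 'M[F]_(p, k)) m (V : 'M[F]_(m, k)) : {set 'M[F]_(j, k)} :=
  [set B | (B <= U)%MS && (\rank (col_mx V B) == \rank V + j)%N].

Lemma indep_ext_cons j p (U : 'M[F]_(p, k)) m (V : 'M[F]_(m, k))
    (w : 'rV[F]_k) (B : 'M[F]_(j, k)) :
  (col_mx w B \in indep_ext j.+1 U V) =
  [&& B \in indep_ext j U V, (w <= U)%MS & ~~ (w <= col_mx V B)%MS].
Proof.
rewrite !inE (col_mx_sub w B U) mxrank_col_mx_cons.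
have := mxrank_col_mx_leq V B.
case: (w <= U)%MS; case: (B <= U)%MS; rewrite ?andbF //=.
case: (~~ _) => le /=; first by rewrite addn1 addnS eqSS andbT.
by rewrite addn0 andbF; apply/negbTE; lia.
Qed.

Lemma card_indep_ext_S j p (U : 'M[F]_(p, k)) m (V : 'M[F]_(m, k)) :
  #|indep_ext j.+1 U V| =
  (\sum_(B in indep_ext j U V) #|[set w : 'rV_k | (w <= U)%MS & ~~ (w <= col_mx V B)%MS]|)%N.
Proof.
rewrite -sum1_card (partition_big (fun B : 'M_(1 + j, k) => dsubmx B) (mem (indep_ext j U V))) /=.
  apply: eq_bigr => B BI; rewrite -sum1_card.
  rewrite (reindex (fun w : 'rV_k => col_mx w B)) /=.
    by apply: eq_bigl => w; rewrite indep_ext_cons BI col_mxKd eqxx andbT inE.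
  exists (fun B' : 'M[F]_(1 + j, k) => usubmx B') => [w _ | B']; first by rewrite col_mxKu.
  by case/andP=> _ /eqP <-; rewrite vsubmxK.
by move=> B; rewrite -[B in B \in _]vsubmxK indep_ext_cons => /andP[].
Qed.

Lemma card_indep_ext j p (U : 'M[F]_(p, k)) m (V : 'M[F]_(m, k)) : (V <= U)%MS ->
  #|indep_ext j U V| = (\prod_(i < j) (#|F| ^ \rank U - #|F| ^ (\rank V + i)))%N.
Proof.
move=> sVU; elim: j => [|j IHj].
  rewrite big_ord0; apply: (@eq_card1 _ 0) => B.
  by rewrite !inE [B]flatmx0 sub0mx -addsmxE addsmx0 addn0 eqxx; case: eqP.
rewrite big_ord_recr /= -IHj card_indep_ext_S -sum_nat_const.
apply: eq_bigr => B /[!inE] /andP[sBU /eqP rankVB].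
have -> : [set w : 'rV_k | (w <= U)%MS & ~~ (w <= col_mx V B)%MS] =
          [set w | (w <= U)%MS] :\: [set w | (w <= col_mx V B)%MS].
  by apply/setP => w; rewrite !inE andbC.
rewrite cardsD (setIidPr _) ?card_submx ?rankVB //.
apply/subsetP => w; rewrite !inE => /submx_trans; apply.
by rewrite col_mx_sub sVU.
Qed.

End IndependentExtensions.

Section GaussianBinomial.
Variable R : numFieldType.

Definition nframes (m e : nat) : R := \prod_(i < e) (2 ^+ m - 2 ^+ i).

Definition gbinom (m e : nat) : R := nframes m e / nframes e e.

Lemma two_powB_neq0 a b : (b < a)%N -> 2 ^+ a - 2 ^+ b != 0 :> R.
Proof. by move=> ltba; rewrite subr_eq0 gt_eqF // ltr_eXn2l // ltr1n. Qed.

Lemma nframes_neq0 e : nframes e e != 0.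
Proof. by apply/prodf_neq0 => i _; apply: two_powB_neq0. Qed.

Lemma natr_prod_two_powB u r j : (r + j <= u)%N ->
  (\prod_(i < j) (2 ^ u - 2 ^ (r + i)))%N%:R = 2 ^+ (r * j) * nframes (u - r) j.
Proof.
move=> le_rj_u; rewrite natr_prod exprM.
have -> : (2 ^+ r) ^+ j = \prod_(i < j) 2 ^+ r :> R by rewrite prodr_const card_ord.
rewrite -big_split /=.
apply: eq_bigr => i _; have lt_ij := ltn_ord i.
by rewrite natrB ?leq_exp2l ?natrX // ?mulrBr -?exprD ?subnKC //; lia.
Qed.

Lemma gbinom_m0 m : gbinom m 0 = 1.
Proof. by rewrite /gbinom /nframes !big_ord0 divr1. Qed.

Lemma gbinom_mm m : gbinom m m = 1.
Proof. by rewrite /gbinom divff ?nframes_neq0. Qed.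

Lemma nframes_recr m e : nframes m e.+1 = nframes m e * (2 ^+ m - 2 ^+ e).
Proof. by rewrite /nframes big_ord_recr. Qed.

Lemma nframes_recl m e : nframes m.+1 e.+1 = (2 ^+ m.+1 - 1) * 2 ^+ e * nframes m e.
Proof.
rewrite /nframes big_ord_recl expr0 -mulrA.
have -> : 2 ^+ e = \prod_(i < e) 2 :> R by rewrite prodr_const card_ord.
rewrite -big_split /=.
by congr (_ * _); apply: eq_bigr => i _; rewrite /bump /= add1n !exprS; ring.
Qed.

Lemma gbinom_pascal m e : (e <= m)%N ->
  gbinom m.+1 e.+1 = gbinom m e.+1 + 2 ^+ (m - e) * gbinom m e.
Proof.
move=> le_em; rewrite /gbinom !nframes_recl nframes_recr.
have powm : 2 ^+ m = 2 ^+ e * 2 ^+ (m - e) :> R by rewrite -exprD subnKC.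
have Ne_neq0 := nframes_neq0 e.
have pow_neq0 : 2 ^+ e != 0 :> R by rewrite expf_neq0 ?pnatr_eq0.
have pred_neq0 : 2 ^+ e.+1 - 1 != 0 :> R by rewrite -(expr0 2) two_powB_neq0.
rewrite !exprS powm; rewrite exprS in pred_neq0.
by field; rewrite Ne_neq0 pow_neq0 pred_neq0.
Qed.

End GaussianBinomial.

Section KcIdentity.
Variable R : realType.

Lemma Kc1 : Kc R 1 = 1.
Proof. by rewrite /Kc big_geq. Qed.

Lemma KcS d : (0 < d)%N -> Kc R d.+1 = Kc R d * (1 - 2 ^+ d).
Proof. by move=> d_gt0; rewrite /Kc big_nat_recr. Qed.

Lemma sum_Kc_gbinom m : \sum_(e < m) Kc R (m - e) * gbinom R m e = m%:R.
Proof.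
elim: m => [|m IHm]; first by rewrite big_ord0.
set D := \sum_(e < m) Kc R (m - e) * (2 ^+ (m - e) * gbinom R m e).
have sum_recl : \sum_(e < m.+1) Kc R (m.+1 - e) * gbinom R m e =
    Kc R m.+1 + \sum_(e < m) Kc R (m - e) * gbinom R m e.+1.
  by rewrite big_ord_recl subn0 gbinom_m0 mulr1.
have sum_recr : \sum_(e < m.+1) Kc R (m.+1 - e) * gbinom R m e = 1 + (m%:R - D).
  rewrite big_ord_recr /= subSn // subnn Kc1 gbinom_mm mulr1 -IHm /D -sumrB addrC.
  congr (_ + _); apply: eq_bigr => e _.
  by rewrite subSn 1?ltnW // KcS ?subn_gt0 //; ring.
rewrite big_ord_recl subn0 gbinom_m0 mulr1.
under eq_bigr => e _ do rewrite lift0 subSS (gbinom_pascal _ (ltnW (ltn_ord e))) mulrDr.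
rewrite big_split /= -/D addrA -sum_recl sum_recr -natr1; ring.
Qed.

End KcIdentity.

Section SubspacesContaining.
Variable k : nat.

Lemma card_F2 : #|'F_2| = 2%N.
Proof. by rewrite card_Fp. Qed.

Lemma span_setP (M M' : 'M['F_2]_k) : reflect (span_set M = span_set M') (M == M')%MS.
Proof.
apply: (iffP idP) => [/eqmxP eqMM' | eqS].
  by apply/setP => v; rewrite !inE eqMM'.
by apply/rV_eqP => v; have := congr1 (fun S : {set W k} => v \in S) eqS; rewrite !inE.
Qed.

Lemma rows_in_span_set m (V : 'M['F_2]_(m, k)) (M : 'M['F_2]_k) :
  [forall i, row i V \in span_set M] = (V <= M)%MS.
Proof. by apply/forallP/row_subP => sVM i; [move: (sVM i) | ]; rewrite inE ?sVM. Qed.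

Definition Xi_sup m (V : 'M['F_2]_(m, k)) d : {set {set W k}} :=
  [set S in Xi k d | [forall i, row i V \in S]].

Lemma Xi_sup_small m (V : 'M['F_2]_(m, k)) d : (d < \rank V)%N -> Xi_sup V d = set0.
Proof.
move=> lt_d_rV; apply/setP => S; rewrite !inE; apply/negbTE.
apply/andP => -[/existsP[M /andP[/eqP -> /eqP rankM]]].
by rewrite rows_in_span_set => /mxrankS; rewrite rankM leqNgt lt_d_rV.
Qed.

Lemma card_Xi_sup m (V : 'M['F_2]_(m, k)) d : (\rank V <= d)%N ->
  (#|Xi_sup V d| * \prod_(i < d - \rank V) (2 ^ d - 2 ^ (\rank V + i)) =
   \prod_(i < d - \rank V) (2 ^ k - 2 ^ (\rank V + i)))%N.
Proof.
move=> le_rV_d; set r := \rank V.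
have := card_indep_ext (d - r) (submx1 V); rewrite mxrank1 card_F2 => <-.
rewrite -[#|indep_ext _ _ _|]sum1_card.
rewrite (partition_big (fun B => span_set (V + B)%MS) (mem (Xi_sup V d))) /=.
  rewrite -sum_nat_const; apply: eq_bigr => S.
  rewrite !inE => /andP[/existsP[M /andP[/eqP -> /eqP rankM]]].
  rewrite rows_in_span_set => sVM.
  have := card_indep_ext (d - r) sVM; rewrite rankM card_F2 => <-.
  rewrite -sum1_card; apply: eq_bigl => B; rewrite !inE submx1 /=.
  have [rankVB | ] := eqVneq (\rank (col_mx V B)) (r + (d - r))%N; last by rewrite andbF.
  rewrite andbT -addsmxE in rankVB *.
  apply/idP/eqP => [sBM | /span_setP/andP[sVBM _]]; last first.
    exact: submx_trans (addsmxSr V B) sVBM.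
  apply/span_setP; have sVBM : (V + B <= M)%MS by rewrite addsmx_sub sVM.
  by rewrite -(mxrank_leqif_eq sVBM) rankVB rankM subnKC.
move=> B; rewrite !inE submx1 /= => /eqP rankVB; apply/andP; split.
  by apply/existsP; exists (V + B)%MS; rewrite eqxx addsmxE rankVB subnKC ?eqxx.
by rewrite rows_in_span_set addsmxSl.
Qed.

Lemma card_Xi_sup_gbinom (R : numFieldType) m (V : 'M['F_2]_(m, k)) d :
  (\rank V <= d <= k)%N -> #|Xi_sup V d|%:R = gbinom R (k - \rank V) (d - \rank V).
Proof.
case/andP => le_rV_d le_dk; set r := \rank V.
have := congr1 (fun x => x%:R : R) (card_Xi_sup le_rV_d).
rewrite natrM !natr_prod_two_powB ?subnKC ?leq_sub2r // -/r.
set c := 2 ^+ _; have c_neq0 : c != 0 by rewrite expf_neq0 ?pnatr_eq0.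
move=> eq_counts; apply: (mulIf (mulf_neq0 c_neq0 (nframes_neq0 R (d - r)))).
by rewrite eq_counts /gbinom mulrCA divfK ?nframes_neq0.
Qed.

Lemma sum_Kc_card_Xi_sup (R : realType) m (V : 'M['F_2]_(m, k)) :
  \sum_(1 <= d < k.+1) Kc R d * #|Xi_sup V (k - d)|%:R = k%:R - (\rank V)%:R.
Proof.
have le_rV_k := rank_leq_col V; set r : nat := \rank V in le_rV_k *.
rewrite -natrB // (big_cat_nat (n := (k - r).+1)) //=; last by rewrite ltnS leq_subr.
rewrite [X in _ + X]big1_seq ?addr0 => [|d]; last first.
  rewrite mem_index_iota => /and3P[_ lt_kr_d lt_d_k].
  by rewrite Xi_sup_small ?cards0 ?mulr0 // -/r; lia.
rewrite (@eq_big_nat _ _ _ _ _ _ (fun d => Kc R d * gbinom R (k - r) (k - r - d))); last first.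
  move=> d /andP[d_gt0 lt_d_kr]; rewrite card_Xi_sup_gbinom; last by lia.
  by congr (_ * gbinom _ _ _); lia.
rewrite -(sum_Kc_gbinom R (k - r)) big_nat_rev big_add1 succnK big_mkord; apply: eq_bigr => e _.
have lt_e := ltn_ord e.
by congr (Kc R _ * gbinom R _ _); lia.
Qed.

End SubspacesContaining.

Section SubsetSums.
Variables (R : comPzRingType) (I : finType).

Lemma prod_if_in (a b : R) (A : {set I}) :
  \prod_i (if i \in A then a else b) = a ^+ #|A| * b ^+ (#|I| - #|A|).
Proof.
rewrite (bigID (mem A)) /= -(cardC (mem A)) addKn -!prodr_const.
by congr (_ * _); apply: eq_bigr => i; [move=> -> | move=> /negbTE ->].
Qed.

Lemma sum_binomial_subset (a b : R) (T : {set I}) :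
  \sum_(A : {set I}) a ^+ #|A| * b ^+ (#|I| - #|A|) * (A \subset T)%:R =
  (a + b) ^+ #|T| * b ^+ (#|I| - #|T|).
Proof.
rewrite -prod_if_in.
have -> : \prod_i (if i \in T then a + b else b) = \prod_i ((i \in T)%:R * a + b).
  by apply: eq_bigr => i _; case: (i \in T); rewrite ?mul1r ?mul0r ?add0r.
rewrite bigA_distr; apply: eq_bigr => A _.
have [sAT | /subsetPn[i iA iNT]] := boolP (A \subset T).
  rewrite mulr1 -prod_if_in; apply: eq_bigr => i _.
  by case: ifP => // iA; rewrite (subsetP sAT) ?mul1r.
by rewrite mulr0 (bigD1 i) //= iA (negbTE iNT) !mul0r.
Qed.

Lemma sum_binomial (a b : R) :
  \sum_(A : {set I}) a ^+ #|A| * b ^+ (#|I| - #|A|) = (a + b) ^+ #|I|.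
Proof.
have := sum_binomial_subset a b setT; rewrite cardsT subnn expr0 mulr1 => <-.
by apply: eq_bigr => A _; rewrite subsetT mulr1.
Qed.

Lemma sum_binomial_mem (a b : R) (x : I) :
  \sum_(A : {set I}) a ^+ #|A| * b ^+ (#|I| - #|A|) * (x \in A)%:R =
  a * (a + b) ^+ #|I|.-1.
Proof.
have I_gt0 : (0 < #|I|)%N by apply/card_gt0P; exists x.
have memE (A : {set I}) : (x \in A)%:R = 1 - (A \subset [set~ x])%:R :> R.
  by rewrite subsetC sub1set in_setC; case: (x \in A); rewrite ?subrr ?subr0.
under eq_bigr do rewrite memE mulrBr mulr1.
rewrite sumrB sum_binomial sum_binomial_subset cardsC1 (_ : #|I| - #|I|.-1 = 1)%N; last by lia.
by rewrite -{1}(prednK I_gt0) exprS; ring.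
Qed.


Lemma sum_binomial_card (a b : R) :
  \sum_(A : {set I}) a ^+ #|A| * b ^+ (#|I| - #|A|) * #|A|%:R =
  #|I|%:R * (a * (a + b) ^+ #|I|.-1).
Proof.
have cardE (A : {set I}) : #|A|%:R = \sum_x (x \in A)%:R :> R.
  by rewrite -sum1_card natr_sum big_mkcond; apply: eq_bigr => x _; case: (x \in A).
under eq_bigr => A _ do rewrite [#|A|%:R]cardE mulr_sumr.
rewrite exchange_big /= (eq_bigr _ (fun x _ => sum_binomial_mem a b x)).
by rewrite sumr_const mulr_natl.
Qed.

Lemma sum_draws_subset (T : {set I}) mu :
  \sum_(A : {set I}) (#|A| == mu)%:R * (A \subset T)%:R = 'C(#|T|, mu)%:R :> R.
Proof.
rewrite -cards_draws -sum1_card natr_sum [RHS]big_mkcond /=.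
apply: eq_bigr => A _; rewrite inE andbC.
by case: (_ == _); case: (_ \subset _); rewrite /= ?mulr1 ?mulr0.
Qed.

End SubsetSums.

Section RatioOfBinomials.
Variable R : numFieldType.

Lemma natr_ffact t mu : (t ^_ mu)%:R = \prod_(0 <= i < mu) (t%:R - i%:R) :> R.
Proof.
elim: mu => [|mu IHmu]; first by rewrite big_geq.
rewrite ffactnSr natrM big_nat_recr //= -IHmu.
have [le_mu_t | lt_t_mu] := leqP mu t; first by rewrite natrB.
by rewrite (ffact_small lt_t_mu) !mul0r.
Qed.

Lemma prod_ratio_binom t n mu : (mu <= n)%N ->
  \prod_(0 <= i < mu) ((t%:R / n%:R - i%:R / n%:R) / (1 - i%:R / n%:R)) =
  'C(t, mu)%:R / 'C(n, mu)%:R :> R.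
Proof.
move=> le_mu_n.
rewrite (@eq_big_nat _ _ _ _ _ _ (fun i => (t%:R - i%:R) / (n%:R - i%:R))); last first.
  move=> i /andP[_ lt_i_mu]; have n_neq0 : n%:R != 0 :> R by rewrite pnatr_eq0; lia.
  have ni_neq0 : n%:R - i%:R != 0 :> R by rewrite -natrB ?pnatr_eq0; lia.
  by field; rewrite n_neq0 ni_neq0.
rewrite prodf_div -!natr_ffact -!bin_ffact !natrM invfM mulrACA divff ?mulr1 //.
by rewrite pnatr_eq0 -lt0n fact_gt0.
Qed.

End RatioOfBinomials.

Lemma bits_inj m i i' : (i < 2 ^ m)%N -> (i' < 2 ^ m)%N ->
  (forall j, (j < m)%N -> odd (i %/ 2 ^ j) = odd (i' %/ 2 ^ j)) -> i = i'.
Proof.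
elim: m i i' => [|m IHm] i i' lt_i lt_i' eq_bits; first by rewrite expn0 in lt_i lt_i'; lia.
have eq_odd := eq_bits 0%N (ltn0Sn _); rewrite expn0 !divn1 in eq_odd.
have eq_half : i./2 = i'./2.
  apply: IHm; rewrite -?divn2 ?ltn_divLR // -?expnSr // => j lt_jm.
  by have := eq_bits j.+1 lt_jm; rewrite -!divnMA -expnS.
by rewrite -(odd_double_half i) -(odd_double_half i') eq_odd eq_half.
Qed.

Section CodeDefinitionVector.
Variables (R : realType) (k n : nat).
Implicit Type G : 'M['F_2]_(k, n).

Lemma nu_bij : bijective (@nu k).
Proof.
apply: inj_card_bij; last by rewrite card_ord /W card_mx card_F2 mul1n.
move=> i i' eq_nu; apply: val_inj; apply: (@bits_inj k); try exact: ltn_ord.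
move=> j lt_jk; have := congr1 (fun v : W k => v 0 (Ordinal lt_jk)) eq_nu.
by rewrite !mxE; do 2 case: (odd _).
Qed.

Definition cols_in G (S : {set W k}) : {set 'I_n} := [set j | colW G j \in S].

Lemma zeta_cdv G S : zeta S (cdv R G) = #|cols_in G S|%:R / n%:R.
Proof.
rewrite /zeta /cdv -mulr_suml -natr_sum; congr (_%:R / _).
rewrite -(@reindex _ _ _ _ _ (@nu k) (mem S) (fun w => #|[set j | colW G j == w]|)
            (onW_bij _ nu_bij)) /=.
rewrite -sum1_card (partition_big (@colW k n G) (mem S)) /=; last by move=> j; rewrite inE.
apply: eq_bigr => w wS; rewrite -sum1_card; apply: eq_bigl => j.
by rewrite !inE; case: eqP => [-> | _]; rewrite ?wS ?andbF.
Qed.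

Lemma row_trmx_subcols G (Rs : {set 'I_n}) i :
  row i (subcols G Rs)^T = colW G (enum_val i).
Proof. by rewrite -tr_col /subcols col_colsub. Qed.

Lemma rows_subcols_in G (Rs : {set 'I_n}) (S : {set W k}) :
  [forall i, row i (subcols G Rs)^T \in S] = (Rs \subset cols_in G S).
Proof.
apply/forallP/subsetP => [inS j jRs | sRsS i]; last first.
  by rewrite row_trmx_subcols; have := sRsS _ (enum_valP i); rewrite inE.
by have := inS (enum_rank_in jRs j); rewrite row_trmx_subcols enum_rankK_in // inE.
Qed.

Lemma loss_cols_in G (Rs : {set 'I_n}) :
  loss R G Rs = #|Rs|%:R - k%:R +
    \sum_(1 <= d < k.+1) Kc R d * \sum_(S in Xi k (k - d)) (Rs \subset cols_in G S)%:R.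
Proof.
have count d : \sum_(S in Xi k d) (Rs \subset cols_in G S)%:R =
                #|Xi_sup (subcols G Rs)^T d|%:R :> R.
  rewrite -sum1_card natr_sum [RHS]big_mkcond [LHS]big_mkcond /=.
  apply: eq_bigr => S _; rewrite [in RHS]inE rows_subcols_in.
  by case: (S \in _); case: (_ \subset _).
under eq_bigr => d _ do rewrite count.
by rewrite sum_Kc_card_Xi_sup mxrank_tr /loss; ring.
Qed.

Lemma expect_loss G (w : {set 'I_n} -> R) :
  \sum_(Rs : {set 'I_n}) w Rs * loss R G Rs =
  \sum_(Rs : {set 'I_n}) w Rs * #|Rs|%:R - k%:R * \sum_(Rs : {set 'I_n}) w Rs +
  \sum_(1 <= d < k.+1) Kc R d *
    \sum_(S in Xi k (k - d)) \sum_(Rs : {set 'I_n}) w Rs * (Rs \subset cols_in G S)%:R.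
Proof.
under eq_bigr => Rs _ do rewrite loss_cols_in mulrDr mulrBr mulr_sumr.
rewrite big_split sumrB mulr_sumr /=; congr (_ - _ + _).
  by apply: eq_bigr => Rs _; rewrite mulrC.
rewrite exchange_big; apply: eq_bigr => d _ /=.
under eq_bigr => Rs _ do rewrite mulrCA mulr_sumr.
by rewrite -mulr_sumr exchange_big.
Qed.

Lemma Phi_cdv G S mu : (mu <= n)%N ->
  Phi n S mu (cdv R G) = 'C(#|cols_in G S|, mu)%:R / 'C(n, mu)%:R.
Proof. by move=> le_mu_n; rewrite /Phi zeta_cdv prod_ratio_binom. Qed.

Lemma phi_cdv G S eps : (0 < n)%N -> 0 <= eps ->
  phi n S eps (cdv R G) = eps ^+ (n - #|cols_in G S|).
Proof.
move=> n_gt0 eps_ge0; rewrite /phi zeta_cdv -powR_mulrn //.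
have le_T_n : (#|cols_in G S| <= n)%N by rewrite -[n in (_ <= n)%N]card_ord max_card.
have n_neq0 : n%:R != 0 :> R by rewrite pnatr_eq0 -lt0n.
by rewrite natrB //; congr (_ `^ _); field.
Qed.

End CodeDefinitionVector.

Section ExpectedLoss.
Variables (R : realType) (k n : nat) (G : 'M['F_2]_(k, n)).

Lemma L_unif_formula mu : (0 < mu <= n)%N ->
  L_unif R G mu = mu%:R - k%:R +
    \sum_(1 <= delta < k.+1) Kc R delta * \sum_(S in Xi k (k - delta)) Phi n S mu (cdv R G).
Proof.
case/andP=> mu_gt0 le_mu_n; set C : R := 'C(n, mu)%:R.
have C_neq0 : C != 0 by rewrite pnatr_eq0 -lt0n bin_gt0.
set w := fun Rs : {set 'I_n} => (#|Rs| == mu)%:R / C.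
have prob_sub (T : {set 'I_n}) :
    \sum_(Rs : {set 'I_n}) w Rs * (Rs \subset T)%:R = 'C(#|T|, mu)%:R / C.
  by rewrite -(sum_draws_subset R T mu) mulr_suml; apply: eq_bigr => Rs _; rewrite mulrAC.
have total : \sum_(Rs : {set 'I_n}) w Rs = 1.
  have := prob_sub setT; rewrite cardsT card_ord divff // => <-.
  by apply: eq_bigr => Rs _; rewrite subsetT mulr1.
have mean : \sum_(Rs : {set 'I_n}) w Rs * #|Rs|%:R = mu%:R.
  rewrite -[RHS]mulr1 -total mulr_sumr; apply: eq_bigr => Rs _.
  by rewrite /w; case: eqP => [-> | _]; rewrite ?mul0r ?mulr0 // mulrC.
have -> : L_unif R G mu = \sum_(Rs : {set 'I_n}) w Rs * loss R G Rs.
  rewrite /L_unif mulr_suml big_mkcond /=; apply: eq_bigr => Rs _.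
  by rewrite /w; case: (_ == _); rewrite /= ?mul1r ?mul0r // mulrC.
rewrite expect_loss mean total mulr1; congr (_ + _); apply: eq_bigr => d _.
by congr (_ * _); apply: eq_bigr => S _; rewrite prob_sub Phi_cdv.
Qed.

Lemma l_bern_formula eps : (0 < n)%N -> 0 <= eps ->
  l_bern G eps = n%:R * (1 - eps) - k%:R +
    \sum_(1 <= delta < k.+1) Kc R delta * \sum_(S in Xi k (k - delta)) phi n S eps (cdv R G).
Proof.
move=> n_gt0 eps_ge0; have sum1 : 1 - eps + eps = 1 by rewrite subrK.
have -> : l_bern G eps =
    \sum_(Rs : {set 'I_n}) (1 - eps) ^+ #|Rs| * eps ^+ (#|'I_n| - #|Rs|) * loss R G Rs.
  by rewrite card_ord.
rewrite expect_loss sum_binomial_card sum_binomial.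
under eq_bigr => d _ do under eq_bigr => S _ do rewrite sum_binomial_subset.
rewrite sum1 !expr1n card_ord !mulr1; congr (_ + _); apply: eq_bigr => d _.
by congr (_ * _); apply: eq_bigr => S _; rewrite expr1n mul1r phi_cdv.
Qed.

End ExpectedLoss.

Unset Implicit Arguments. Set Strict Implicit.

Theorem theorem1 (R : realType) (k n : nat) (G : 'M['F_2]_(k, n)) :
  (1 <= k)%N -> (1 <= n)%N ->
  (forall mu : nat, (0 < mu <= n)%N ->
     L_unif R G mu =
       mu%:R - k%:R +
       \sum_(1 <= delta < k.+1)
          Kc R delta * \sum_(S in Xi k (k - delta)) Phi n S mu (cdv R G))
  /\
  (forall eps : R, 0 <= eps <= 1 ->
     l_bern G eps =
       n%:R * (1 - eps) - k%:R +
       \sum_(1 <= delta < k.+1)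
          Kc R delta * \sum_(S in Xi k (k - delta)) phi n S eps (cdv R G)).
Proof.
move=> _ n_gt0; split; first exact: L_unif_formula.
by move=> eps /andP[eps_ge0 _]; apply: l_bern_formula.
Qed.
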